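(* Let $k$ be a positive integer, $V=[k]\times[k]$, terminals $t_i=(i,i)$, and $\gamma=2\lfloor 2k-\sqrt{3k^2-2k}\rfloor$. Let $f$ be the function on $2^V$ defined below with this $\gamma$. Call a partition $(A_1,\ldots,A_k)$ of $V$ with $t_\ell\in A_\ell$ for all $\ell$ an assignment, with cost $\sum_{\ell=1}^k f(A_\ell)$, and call it symmetric if $(i,j)$ and $(j,i)$ lie in the same part for all $i,j$. Then the ratio of the minimum cost of a symmetric assignment to the minimum cost of an assignment is at least $\frac{8\sqrt3-12}{2\sqrt3-2}-O(\frac1k)$.
   Context: Rows $R_i=\{(i,j):j\in[k]\}$, columns $C_i=\{(j,i):j\in[k]\}$. Define $\phi:\mathbb{R}\to\mathbb{R}$ by $\phi(t)=t$ if $t\le k-\gamma/2$ and $\phi(t)=2k-t-\gamma$ otherwise. For $i\in[k]$ and $S\subseteq V$ let $g_i(S)=\phi(|S|)$ if $t_i\notin S$ and $g_i(S)=\phi(k-|S|)$ if $t_i\in S$. Then $f(S)=\sum_{i=1}^k g_i(S\cap R_i)+\sum_{i=1}^k g_i(S\cap C_i)$. *)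

From HB Require Import structures.
From mathcomp Require Import all_boot all_order all_algebra.
From mathcomp Require Import reals.
Set Implicit Arguments. Unset Strict Implicit. Unset Printing Implicit Defensive.
Import Order.TTheory GRing.Theory Num.Theory.
Local Open Scope ring_scope.

(* [k] is represented by 'I_k = {0,...,k-1}; V = [k] x [k]; t_i = (i,i). *)
Definition V (k : nat) := ('I_k * 'I_k)%type.

Definition term (k : nat) (i : 'I_k) : V k := (i, i).

Definition row (k : nat) (i : 'I_k) : {set V k} := [set v : V k | v.1 == i].
Definition col (k : nat) (i : 'I_k) : {set V k} := [set v : V k | v.2 == i].

Definition gam (R : realType) (k : nat) : R :=
  2 * (Num.floor (2 * (k%:R : R) - Num.sqrt (3 * (k%:R : R) ^+ 2 - 2 * (k%:R : R))))%:~R.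

Definition phi (R : realType) (k : nat) (t : R) : R :=
  if t <= k%:R - gam R k / 2 then t else 2 * k%:R - t - gam R k.

Definition g (R : realType) (k : nat) (i : 'I_k) (S : {set V k}) : R :=
  if term i \notin S then @phi R k (#|S|%:R) else @phi R k ((k - #|S|)%:R).

Definition f (R : realType) (k : nat) (S : {set V k}) : R :=
  \sum_(i < k) @g R k i (S :&: row i) + \sum_(i < k) @g R k i (S :&: col i).

Definition assignment (k : nat) (A : 'I_k -> {set V k}) : Prop :=
  (forall l : 'I_k, term l \in A l) /\
  (forall v : V k, exists! l : 'I_k, v \in A l).

Definition symmetric_assignment (k : nat) (A : 'I_k -> {set V k}) : Prop :=
  assignment A /\
  (forall (i j : 'I_k) (l : 'I_k), ((i, j) \in A l) = ((j, i) \in A l)).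

Definition cost (R : realType) (k : nat) (A : 'I_k -> {set V k}) : R :=
  \sum_(l < k) @f R k (A l).

Definition is_min_cost (R : realType) (k : nat)
    (P : ('I_k -> {set V k}) -> Prop) (m : R) : Prop :=
  (exists A, P A /\ @cost R k A = m) /\ (forall A, P A -> m <= @cost R k A).

From Pilot Require Import Defs.
From HB Require Import structures.
From mathcomp Require Import all_boot all_order all_algebra.
From mathcomp Require Import reals.
From mathcomp Require Import ring lra zify.
Set Implicit Arguments. Unset Strict Implicit. Unset Printing Implicit Defensive.
Import Order.TTheory GRing.Theory Num.Theory.
Local Open Scope ring_scope.

(* With p = k - gamma/2, phi is the tent t |-> min(t, 2p - t), and a line (row
   or column) of terminal i whose k vertices are spread over the parts with
   x_l vertices in part l costs 4p - 2 x_L if some part L <> i holds more than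
   p of them, and otherwise 2 (k - x_i) or 2p according as the terminal's own
   part misses at most p of them or not.  Giving every row to its terminal
   therefore costs at most 2pk.  In a symmetric assignment rows and columns
   cost the same, and symmetry forces misplaced vertices: for two rows i <> c
   whose own parts are large, (i,c) and (c,i) lie in one part, so one of them
   is misplaced, and a row with a heavy foreign part L forces (c,j) to be
   misplaced for most rows c of that kind.  Charging these misplaced vertices
   and minimising the resulting quadratic gives a symmetric cost of at least
   2 (2pk - p^2 - 4k); as p = (sqrt 3 - 1) k + O(1), the ratio is at least
   3 - sqrt 3 - O(1/k), and 3 - sqrt 3 = (8 sqrt 3 - 12) / (2 sqrt 3 - 2). *)

Section LineCost.
Variables (R : realFieldType) (k : nat) (p : R).

Definition tent (t : R) : R := if t <= p then t else 2 * p - t.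

Lemma tent_le_id t : tent t <= t.
Proof. by rewrite /tent; case: ifP => le_tp; lra. Qed.

Lemma tent_leB t : tent t <= 2 * p - t.
Proof. by rewrite /tent; case: ifP => le_tp; lra. Qed.

Definition line_cost (x : 'I_k -> R) (i : 'I_k) : R :=
  tent (k%:R - x i) + \sum_(l < k | l != i) tent (x l).

Lemma eq_line_cost x y i : x =1 y -> line_cost x i = line_cost y i.
Proof.
move=> eq_xy; rewrite /line_cost eq_xy; congr (_ + _).
by apply: eq_bigr => l _; rewrite eq_xy.
Qed.

Definition heavy (x : 'I_k -> R) (i : 'I_k) : option 'I_k :=
  [pick l | (l != i) && (p < x l)].

Variable x : 'I_k -> R.
Hypotheses (x_ge0 : forall l, 0 <= x l) (sum_x : \sum_(l < k) x l = k%:R).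

Lemma load_le_total l : x l <= k%:R.
Proof. by rewrite -sum_x (bigD1 l) //= lerDl sumr_ge0. Qed.

Lemma pair_load_le_total l L : l != L -> x l + x L <= k%:R.
Proof.
move=> neq_lL; rewrite -sum_x (bigD1 l) //= (bigD1 L) 1?eq_sym //= addrA lerDl.
exact: sumr_ge0.
Qed.

Lemma sum_tent_le i : \sum_(l < k | l != i) tent (x l) <= k%:R - x i.
Proof.
have := sum_x; rewrite (bigD1 i) //= => split_x.
have : \sum_(l < k | l != i) tent (x l) <= \sum_(l < k | l != i) x l.
  by apply: ler_sum => l _; apply: tent_le_id.
lra.
Qed.

Lemma line_cost_le_deficit i : line_cost x i <= 2 * (k%:R - x i).
Proof. by have := sum_tent_le i; have := tent_le_id (k%:R - x i); rewrite /line_cost; lra. Qed.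

Lemma line_cost_le_peak i : line_cost x i <= 2 * p.
Proof. by have := sum_tent_le i; have := tent_leB (k%:R - x i); rewrite /line_cost; lra. Qed.

Hypothesis k_le_2p : k%:R <= 2 * p.

Lemma line_cost_light i : (forall l, l != i -> x l <= p) ->
  line_cost x i = if k%:R - x i <= p then 2 * (k%:R - x i) else 2 * p.
Proof.
move=> light; rewrite /line_cost.
have -> : \sum_(l < k | l != i) tent (x l) = k%:R - x i.
  have := sum_x; rewrite (bigD1 i) //= => split_x.
  rewrite (eq_bigr x) => [|l /light le_xp]; last by rewrite /tent le_xp.
  lra.
by rewrite /tent; case: ifP => _; lra.
Qed.

Lemma line_cost_heavy i L : L != i -> p < x L -> line_cost x i = 4 * p - 2 * x L.
Proof.
move=> neq_Li lt_pxL.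
have le_xiL : x i + x L <= k%:R by apply: pair_load_le_total; rewrite eq_sym.
have others : \sum_(l < k | (l != i) && (l != L)) tent (x l) = k%:R - x i - x L.
  have -> : k%:R - x i - x L = \sum_(l < k | (l != i) && (l != L)) x l.
    by rewrite -sum_x (bigD1 i) //= (bigD1 L) //=; ring.
  apply: eq_bigr => l /andP [_ neq_lL]; rewrite /tent ifT //.
  by have := pair_load_le_total neq_lL; have := k_le_2p; lra.
rewrite /line_cost (bigD1 L) //= others /tent.
by rewrite ifN ?ifN -?ltNge //; lra.
Qed.

Lemma line_costE i : line_cost x i =
  if heavy x i is Some L then 4 * p - 2 * x L
  else if k%:R - x i <= p then 2 * (k%:R - x i) else 2 * p.
Proof.
rewrite /heavy; case: pickP => [L /andP [neq_Li lt_pxL] | light].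
  exact: line_cost_heavy.
apply: line_cost_light => l neq_li.
by have := light l; rewrite neq_li /= => /negbT; rewrite -leNgt.
Qed.

Lemma line_cost_ge0 i : 0 <= line_cost x i.
Proof.
have := k_le_2p; have := ler0n R k; rewrite line_costE; case: heavy => [L|].
  by have := load_le_total L; lra.
by have := load_le_total i; case: ifP; lra.
Qed.

Lemma line_cost_ge2 i : 2 * k%:R + 2 <= 4 * p -> x i <= k%:R - 1 ->
  2 <= line_cost x i.
Proof.
move=> le_kp le_xi; rewrite line_costE; case: heavy => [L|].
  by have := load_le_total L; lra.
by have := x_ge0 i; case: ifP; lra.
Qed.

End LineCost.

Section Lines.
Variable k : nat.
Implicit Types (i j l : 'I_k) (S : {set V k}).

Lemma card_row i : #|Defs.row i| = k.
Proof.
rewrite (_ : Defs.row i = setX [set i] setT) ?cardsX ?cards1 ?cardsT ?card_ord ?mul1n //.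
by apply/setP => -[a c]; rewrite !inE andbT.
Qed.

Lemma card_col i : #|Defs.col i| = k.
Proof.
rewrite (_ : Defs.col i = setX setT [set i]) ?cardsX ?cards1 ?cardsT ?card_ord ?muln1 //.
by apply/setP => -[a c]; rewrite !inE.
Qed.

Lemma term_in_row i : term i \in Defs.row i.
Proof. by rewrite inE. Qed.

Lemma term_in_col i : term i \in Defs.col i.
Proof. by rewrite inE. Qed.

Lemma card_setI_row S j : #|S :&: Defs.row j| = (\sum_(c < k) ((j, c) \in S))%N.
Proof.
have -> : S :&: Defs.row j = pair j @: [set c | (j, c) \in S].
  apply/setP => -[a c]; rewrite !inE /=; apply/andP/imsetP => [[Sac /eqP eq_aj]|].
    by exists c; rewrite ?inE -?eq_aj.
  by move=> [c' Sc' [-> ->]]; rewrite inE in Sc'.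
rewrite card_imset => [|c c' [] //].
rewrite -sum1_card big_mkcond /=.
by apply: eq_bigr => c _; rewrite inE; case: ((j, c) \in S).
Qed.

Lemma card_rowI_row l i : #|Defs.row l :&: Defs.row i| = ((l == i) * k)%N.
Proof.
have [<-|neq_li] := eqVneq l i; first by rewrite setIid card_row mul1n.
rewrite mul0n (_ : _ :&: _ = set0) ?cards0 //.
apply/setP => -[a c]; rewrite !inE /=.
by case: eqP => // ->; rewrite (negbTE neq_li).
Qed.

Lemma row_assignment : assignment (@Defs.row k).
Proof.
split=> [l | v]; first exact: term_in_row.
by exists v.1; split=> [|l]; rewrite inE // => /eqP.
Qed.

End Lines.

Definition peak (R : realType) (k : nat) : R := k%:R - gam R k / 2.

Lemma phi_tent (R : realType) k (t : R) : phi k t = tent (peak R k) t.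
Proof. by rewrite /phi /tent /peak; case: ifP => _ //; field. Qed.

Section Assignment.
Variables (k : nat) (A : 'I_k -> {set V k}).

Definition line_load (R : numDomainType) (L : {set V k}) (l : 'I_k) : R :=
  #|A l :&: L|%:R.

Definition misplaced (i c : 'I_k) : bool := (i, c) \notin A i.

Lemma row_loadE (R : numDomainType) j l :
  line_load R (Defs.row j) l = (\sum_(c < k) ((j, c) \in A l))%:R.
Proof. by rewrite /line_load card_setI_row. Qed.

Lemma row_deficitE (R : numDomainType) i :
  k%:R - line_load R (Defs.row i) i = (\sum_(c < k) misplaced i c)%:R.
Proof.
apply/eqP; rewrite subr_eq row_loadE -natrD -big_split /=.
rewrite -[X in X%:R == _]card_ord -sum1_card; apply/eqP; congr (_%:R).
by apply: eq_bigr => c _; rewrite /misplaced; case: ((i, c) \in A i).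
Qed.

Hypothesis A_assign : assignment A.

Lemma assignment_uniq v l1 l2 : v \in A l1 -> v \in A l2 -> l1 = l2.
Proof.
have [_ /(_ v) [l0 [_ uniq_l0]]] := A_assign.
by move=> /uniq_l0 <- /uniq_l0 <-.
Qed.

Lemma term_inE i l : (term i \in A l) = (l == i).
Proof.
apply/idP/eqP => [Ail|->]; last exact: A_assign.1.
exact: assignment_uniq Ail (A_assign.1 i).
Qed.

Lemma sum_card_setI (L : {set V k}) : (\sum_(l < k) #|A l :&: L|)%N = #|L|.
Proof.
have one_part v : (\sum_(l < k) (v \in A l))%N = 1%N.
  have [_ /(_ v) [l0 [Al0 uniq_l0]]] := A_assign.
  rewrite (bigD1 l0) //= Al0 big1 // => l neq_ll0.
  by apply/eqP; rewrite eqb0; apply: contraNN neq_ll0 => /uniq_l0 ->.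
have card_sum l : #|A l :&: L| = (\sum_(v in L) (v \in A l))%N.
  rewrite -sum1_card big_mkcond [RHS]big_mkcond /=.
  by apply: eq_bigr => v _; rewrite inE andbC; case: (v \in L); case: (v \in A l).
rewrite (eq_bigr _ (fun l _ => card_sum l)) exchange_big /=.
by rewrite (eq_bigr _ (fun v _ => one_part v)) sum1_card.
Qed.

Lemma sum_line_load (R : numDomainType) (L : {set V k}) : #|L| = k ->
  \sum_(l < k) line_load R L l = k%:R.
Proof. by move=> card_L; rewrite -natr_sum sum_card_setI card_L. Qed.

Lemma line_load_lt (R : numDomainType) (L : {set V k}) l v :
  v \in L -> v \notin A l -> line_load R L l <= #|L|%:R - 1.
Proof.
move=> Lv Alv; rewrite lerBrDr /line_load natr1 ler_nat; apply: proper_card.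
rewrite properEneq subsetIr andbT; apply: contraNneq Alv => eq_L.
by move: Lv; rewrite -eq_L inE => /andP [].
Qed.

Lemma sum_g_line (R : realType) i (L : {set V k}) :
  term i \in L -> #|L| = k ->
  \sum_(l < k) g R i (A l :&: L) = line_cost (peak R k) (line_load R L) i.
Proof.
move=> Li card_L; rewrite /line_cost (bigD1 i) //=; congr (_ + _).
  have := subset_leq_card (subsetIr (A i) L); rewrite card_L => le_k.
  by rewrite /g inE term_inE eqxx Li /= phi_tent natrB.
by apply: eq_bigr => l neq_li; rewrite /g inE term_inE (negbTE neq_li) phi_tent.
Qed.

Lemma cost_lines (R : realType) : cost R A =
  \sum_(i < k) (line_cost (peak R k) (line_load R (Defs.row i)) i
              + line_cost (peak R k) (line_load R (Defs.col i)) i).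
Proof.
rewrite /cost /f big_split /= exchange_big [X in _ + X]exchange_big -big_split /=.
apply: eq_bigr => i _.
by rewrite !sum_g_line ?term_in_row ?term_in_col ?card_row ?card_col.
Qed.

Section LineLoadCost.
Variables (R : realFieldType) (p : R) (L : {set V k}).
Hypothesis card_L : #|L| = k.

Lemma line_cost_load_ge0 i : k%:R <= 2 * p -> 0 <= line_cost p (line_load R L) i.
Proof. by move=> k_le_2p; apply: line_cost_ge0 => //; apply: sum_line_load. Qed.

Lemma line_cost_load_ge2 i v : 2 * k%:R + 2 <= 4 * p -> v \in L -> v \notin A i ->
  2 <= line_cost p (line_load R L) i.
Proof.
move=> le_kp Lv Aiv; have k_le_2p : k%:R <= 2 * p by lra.
apply: line_cost_ge2 => //; first exact: sum_line_load.
by rewrite -card_L; apply: line_load_lt Lv Aiv.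
Qed.

End LineLoadCost.

Lemma cost_ge2 (R : realType) : (1 < k)%N -> 2 * k%:R + 2 <= 4 * peak R k ->
  2 <= cost R A.
Proof.
move=> k_gt1 le_kp; set p := peak R k in le_kp *.
have k_le_2p : k%:R <= 2 * p by lra.
pose row_cost i := line_cost p (line_load R (Defs.row i)) i.
pose col_cost i := line_cost p (line_load R (Defs.col i)) i.
have row_ge0 i : 0 <= row_cost i by apply: line_cost_load_ge0; rewrite ?card_row.
have col_ge0 i : 0 <= col_cost i by apply: line_cost_load_ge0; rewrite ?card_col.
have [i line_ge2] : exists i, 2 <= row_cost i + col_cost i.
  pose i0 := Ordinal (ltnW k_gt1); pose j0 := Ordinal k_gt1.
  have [Ai0|nAi0] := boolP ((i0, j0) \in A i0).
    exists j0; suff: 2 <= col_cost j0 by have := row_ge0 j0; lra.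
    apply: (@line_cost_load_ge2 _ _ _ (card_col j0) _ (i0, j0)) => //.
      by rewrite inE.
    by apply: contraTN isT => /(assignment_uniq Ai0).
  exists i0; suff: 2 <= row_cost i0 by have := col_ge0 i0; lra.
  apply: (@line_cost_load_ge2 _ _ _ (card_row i0) _ (i0, j0)) => //.
  by rewrite inE.
rewrite cost_lines -/p (bigD1 i) //=.
have: 0 <= \sum_(j < k | j != i) (row_cost j + col_cost j).
  by apply: sumr_ge0 => j _; apply: addr_ge0.
by move: line_ge2; rewrite /row_cost /col_cost; lra.
Qed.

End Assignment.

Lemma cost_row_assignment (R : realType) k :
  cost R (@Defs.row k) <= 2 * peak R k * k%:R.
Proof.
rewrite (cost_lines (row_assignment k)) mulr_natr -[k in _ *+ k]card_ord -sumr_const.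
apply: ler_sum => i _; rewrite -[2 * _]add0r; apply: lerD.
  have := line_cost_le_deficit (peak R k)
            (sum_line_load (row_assignment k) R (card_row i)) i.
  by rewrite /line_load card_rowI_row eqxx mul1n subrr mulr0.
exact: line_cost_le_peak (sum_line_load (row_assignment k) R (card_col i)) i.
Qed.

Lemma card_pairs_le_sum (T : finType) (M : rel T) (S : {set T}) :
  (forall i c, i != c -> M i c || M c i) ->
  (#|S| * (#|S| - 1) <= 2 * \sum_(i in S) \sum_(c in S) M i c)%N.
Proof.
move=> covered.
have -> : (2 * \sum_(i in S) \sum_(c in S) M i c
           = \sum_(i in S) \sum_(c in S) (M i c + M c i))%N.
  rewrite mul2n -addnn [X in (_ + X)%N]exchange_big -big_split /=.
  by apply: eq_bigr => i _; rewrite big_split.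
rewrite -sum_nat_const; apply: leq_sum => i Si.
rewrite (cardsD1 i S) Si add1n subSS subn0 -sum1_card.
rewrite [X in (_ <= X)%N](bigD1 i) //=.
apply: leq_trans (leq_addl _ _); rewrite big_mkcond [X in (_ <= X)%N]big_mkcond.
apply: leq_sum => c _; rewrite in_setD1 andbC.
case: (c \in S) => //=; case: eqVneq => //= neq_ci.
by have := covered i c; rewrite eq_sym neq_ci => /(_ isT); case: (M i c); case: (M c i).
Qed.

Section Symmetric.
Variables (k : nat) (A : 'I_k -> {set V k}).
Hypothesis A_sym : symmetric_assignment A.

Lemma misplaced_pair i c : i != c -> misplaced A i c || misplaced A c i.
Proof.
move=> neq_ic; rewrite -negb_and; apply: contra neq_ic => /andP [Aii Acc].
by apply/eqP/(assignment_uniq A_sym.1 Aii); rewrite A_sym.2.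
Qed.

Lemma misplaced_of_mem j c L : c != L -> (j, c) \in A L -> misplaced A c j.
Proof.
move=> neq_cL; rewrite A_sym.2 => ALcj; apply: contra neq_cL => Acc.
by apply/eqP/(assignment_uniq A_sym.1 Acc).
Qed.

Lemma row_load_le j L (S : {set 'I_k}) :
  (\sum_(c < k) ((j, c) \in A L) <= \sum_(c in S) misplaced A c j + #|~: S| + 1)%N.
Proof.
have <- : (\sum_(c < k) (c == L))%N = 1%N.
  by rewrite (bigD1 L) //= eqxx big1 // => c /negbTE ->.
have -> : (\sum_(c in S) misplaced A c j + #|~: S|
           = \sum_(c < k) (if c \in S then misplaced A c j : nat else 1))%N.
  rewrite -sum1_card [RHS](bigID (mem S)) /=; congr (_ + _).
    by apply: eq_bigr => c ->.
  by apply: eq_big => [c|c]; rewrite inE // => /negbTE ->.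
rewrite -big_split /=; apply: leq_sum => c _.
have [->|neq_cL] := eqVneq c L; first by case: ((j, L) \in A L); rewrite addn1.
case: (boolP ((j, c) \in A L)) => // ALjc.
by case: ifP => //; rewrite (misplaced_of_mem neq_cL ALjc).
Qed.

(* Any two rows of S contribute a misplaced vertex (misplaced_pair), and the
   heavy part of a row j in H forces misplaced vertices in the rows of S
   (row_load_le); these two kinds of misplaced vertices are distinct. *)
Lemma misplaced_count (S H : {set 'I_k}) (heavy_part : 'I_k -> 'I_k) :
  [disjoint S & H] ->
  (#|S| * (#|S| - 1) + 2 * \sum_(j in H) \sum_(c < k) ((j, c) \in A (heavy_part j))
   <= 2 * \sum_(i in S) \sum_(c < k) misplaced A i c + 2 * (#|H| * (#|~: S| + 1)))%N.
Proof.
move=> disj_SH.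
have rows_SH : (\sum_(i in S) \sum_(c in S) misplaced A i c
                + \sum_(i in S) \sum_(c in H) misplaced A i c
                <= \sum_(i in S) \sum_(c < k) misplaced A i c)%N.
  rewrite -big_split; apply: leq_sum => i _.
  rewrite big_mkcond [X in (_ + X <= _)%N]big_mkcond -big_split; apply: leq_sum => c _.
  case: ifP => Sc; case: ifP => Hc //=; rewrite ?addn0 //.
  by rewrite (disjointFr disj_SH Sc) in Hc.
have heavy_rows : (\sum_(j in H) \sum_(c < k) ((j, c) \in A (heavy_part j))
                   <= \sum_(i in S) \sum_(c in H) misplaced A i c + #|H| * (#|~: S| + 1))%N.
  rewrite [X in (_ <= X + _)%N]exchange_big -sum_nat_const -big_split.
  by apply: leq_sum => j _; rewrite /= addnA; apply: row_load_le.
have := card_pairs_le_sum S misplaced_pair; lia.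
Qed.

Lemma line_load_col (R : numDomainType) i :
  line_load A R (Defs.col i) =1 line_load A R (Defs.row i).
Proof.
pose swap (v : V k) := (v.2, v.1).
have swapK : involutive swap by case.
move=> l; rewrite /line_load -(card_preimset _ (inv_inj swapK)).
congr (_%:R); apply: eq_card => -[a c].
by rewrite !inE /= A_sym.2.
Qed.

Lemma cost_symmetric (R : realType) :
  cost R A = 2 * \sum_(i < k) line_cost (peak R k) (line_load A R (Defs.row i)) i.
Proof.
rewrite (cost_lines A_sym.1) mulr_sumr; apply: eq_bigr => i _.
by rewrite (eq_line_cost _ _ (line_load_col R i)) mulr2n mulrDl mul1r.
Qed.

End Symmetric.

(* The symmetric row cost is bounded below by the right-hand side, where s
   counts the rows whose own part is large and h those with a heavy foreign
   part; this minimises it over s and h. *)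
Lemma class_count_bound (R : realFieldType) (k p s h : R) :
  0 <= s -> 0 <= h -> s + h <= k -> 0 <= p -> p <= k ->
  3 * k ^+ 2 - 2 * k <= (k + p) ^+ 2 ->
  2 * p * k - p ^+ 2 - 4 * k
    <= s * (s - 1) + h * (4 * p - 2 * k + 2 * s - 2) + 2 * p * (k - s - h).
Proof.
move=> s_ge0 h_ge0 sh_le_k p_ge0 p_le_k kp_sq.
have [le_kps|lt_skp] := lerP (k - p) s.
  have : 0 <= h * (s - (k - p)) by apply: mulr_ge0; lra.
  have : 0 <= (s - p) ^+ 2 by apply: sqr_ge0.
  lra.
have : 0 <= (k - s - h) * ((k - p) - s) by apply: mulr_ge0; lra.
have : 0 <= s * (4 * (k - p) - s) by apply: mulr_ge0; lra.
nra.
Qed.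

Section SymmetricLowerBound.
Variables (k : nat) (A : 'I_k -> {set V k}).
Hypothesis A_sym : symmetric_assignment A.
Variables (R : realFieldType) (p : R).
Hypotheses (k_le_2p : k%:R <= 2 * p) (p_le_k : p <= k%:R)
           (kp_sq : 3 * k%:R ^+ 2 - 2 * k%:R <= (k%:R + p) ^+ 2).

Let x i := line_load A R (Defs.row i).
Let heavy_part i := odflt i (heavy p (x i) i).
Let H := [set i | heavy p (x i) i != None].
Let S := [set i | (heavy p (x i) i == None) && (k%:R - x i i <= p)].
Let misplaced_in_S := (\sum_(i in S) \sum_(c < k) misplaced A i c)%N.
Let heavy_load := (\sum_(j in H) \sum_(c < k) ((j, c) \in A (heavy_part j)))%N.

Lemma sum_row_costE : \sum_(i < k) line_cost p (x i) i =
  2 * p * k%:R + (2 * misplaced_in_S%:R - 2 * p * #|S|%:R)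
               + (2 * p * #|H|%:R - 2 * heavy_load%:R).
Proof.
have costE i : line_cost p (x i) i = 2 * p
    + (if i \in S then 2 * (k%:R - x i i) - 2 * p else 0)
    + (if i \in H then 2 * p - 2 * x i (heavy_part i) else 0).
  have memS : (i \in S) = (heavy p (x i) i == None) && (k%:R - x i i <= p).
    by rewrite inE.
  have memH : (i \in H) = (heavy p (x i) i != None) by rewrite inE.
  rewrite memS memH line_costE ?(sum_line_load A_sym.1) ?card_row // /heavy_part.
  by case: heavy => [L|] /=; [|case: ifP]; lra.
have deficitE : \sum_(i in S) (k%:R - x i i) = misplaced_in_S%:R.
  by rewrite natr_sum; apply: eq_bigr => i _; rewrite row_deficitE.
have heavyE : \sum_(j in H) x j (heavy_part j) = heavy_load%:R.
  by rewrite natr_sum; apply: eq_bigr => j _; rewrite /x row_loadE.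
rewrite (eq_bigr _ (fun i _ => costE i)) !big_split -!big_mkcond /=.
rewrite sumr_const card_ord !sumrB !sumr_const -!mulr_sumr deficitE heavyE.
by rewrite !mulr_natr; ring.
Qed.

Lemma sum_row_cost_ge :
  2 * p * k%:R - p ^+ 2 - 4 * k%:R <= \sum_(i < k) line_cost p (x i) i.
Proof.
have disj_SH : [disjoint S & H].
  rewrite -setI_eq0; apply/eqP/setP => i; rewrite !inE.
  by case: (heavy p (x i) i) => [L|]; rewrite ?andbF ?andbT.
have card_SH : (#|S| + #|H| <= k)%N.
  have := max_card (S :|: H).
  by rewrite cardsU (disjoint_setI0 disj_SH) cards0 subn0 card_ord.
have := misplaced_count A_sym heavy_part disj_SH.
rewrite -/misplaced_in_S -/heavy_load -(ler_nat R) !(natrD, natrM).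
have -> : #|~: S|%:R = k%:R - #|S|%:R :> R.
  by apply/eqP; rewrite eq_sym subr_eq -natrD addnC cardsC card_ord.
have -> : #|S|%:R * (#|S| - 1)%:R = #|S|%:R * (#|S|%:R - 1) :> R.
  by have [->|S_gt0] := posnP #|S|; rewrite ?mul0r // natrB.
rewrite sum_row_costE.
have card_SH_R : #|S|%:R + #|H|%:R <= k%:R :> R by rewrite -natrD ler_nat.
have p_ge0 : 0 <= p by have := ler0n R k; have := k_le_2p; lra.
have := class_count_bound (ler0n R #|S|) (ler0n R #|H|) card_SH_R p_ge0 p_le_k kp_sq.
lra.
Qed.

End SymmetricLowerBound.

Section Peak.
Variables (R : realType) (k : nat).
Let s : R := Num.sqrt (3 * k%:R ^+ 2 - 2 * k%:R).

Lemma peak_floorE : peak R k = k%:R - (Num.floor (2 * k%:R - s))%:~R.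
Proof. by rewrite /peak /gam; field. Qed.

(* gamma is chosen as the largest even integer with k + peak >= s, the
   condition under which class_count_bound holds; then peak is about
   (sqrt 3 - 1) k. *)
Lemma peak_bounds : (10 <= k)%N ->
  [/\ 3 / 5 * k%:R <= peak R k, peak R k <= k%:R,
      peak R k < (Num.sqrt 3 - 1) * k%:R + 1
    & 3 * k%:R ^+ 2 - 2 * k%:R <= (k%:R + peak R k) ^+ 2].
Proof.
rewrite -(ler_nat R) => k_ge10.
have rad_ge0 : 0 <= 3 * k%:R ^+ 2 - 2 * k%:R :> R by nra.
have s_ge0 : 0 <= s := sqrtr_ge0 _.
have s_sq : s ^+ 2 = 3 * k%:R ^+ 2 - 2 * k%:R := sqr_sqrtr rad_ge0.
have y_ge0 : 0 <= Num.sqrt 3 :> R := sqrtr_ge0 _.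
have y_sq : Num.sqrt 3 ^+ 2 = 3 :> R by apply: sqr_sqrtr.
have s_le : s <= Num.sqrt 3 * k%:R.
  rewrite -(@ler_pXn2r _ 2) ?nnegrE ?mulr_ge0 ?ler0n // s_sq exprMn y_sq; nra.
have s_ge : 8 / 5 * k%:R <= s.
  rewrite -(@ler_pXn2r _ 2) ?nnegrE // ?s_sq; nra.
have floor_lo := floor_le (2 * k%:R - s).
have floor_hi := floorD1_gt (2 * k%:R - s); rewrite intrD /= in floor_hi.
have floor_ge0 : 0 <= (Num.floor (2 * k%:R - s))%:~R :> R.
  by rewrite ler0z floor_ge0; nra.
by rewrite peak_floorE; split; nra.
Qed.

End Peak.

Lemma ratio_lower_bound (R : realFieldType) (k p c mS mA : R) :
  10 <= k -> 3 / 5 * k <= p -> p <= k -> p < (c - 1) * k + 1 ->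
  2 * (2 * p * k - p ^+ 2 - 4 * k) <= mS -> 0 < mA -> mA <= 2 * p * k ->
  3 - c - 9 / k <= mS / mA.
Proof.
move=> k_ge10 p_ge p_le p_lt mS_ge mA_gt0 mA_le.
have mS_ge0 : 0 <= mS.
  have : 0 <= (p - 3 / 5 * k) * (2 * k - p) by apply: mulr_ge0; lra.
  nra.
rewrite ler_pdivlMr //.
have [le0|gt0] := lerP (3 - c - 9 / k) 0.
  by apply: le_trans mS_ge0; apply: mulr_le0_ge0 => //; apply: ltW.
apply: le_trans (ler_wpM2l (ltW gt0) mA_le) _.
have -> : (3 - c - 9 / k) * (2 * p * k) = (3 - c) * (2 * p * k) - 18 * p.
  by field; lra.
have : 0 <= p * ((c - 1) * k + 1 - p) by apply: mulr_ge0; lra.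
nra.
Qed.

Lemma sqrt3_ratio (R : rcfType) :
  (8 * Num.sqrt 3 - 12) / (2 * Num.sqrt 3 - 2) = 3 - Num.sqrt 3 :> R.
Proof.
have y_ge0 : 0 <= Num.sqrt 3 :> R := sqrtr_ge0 _.
have y_sq : Num.sqrt 3 ^+ 2 = 3 :> R by apply: sqr_sqrtr.
have denom_neq0 : 2 * Num.sqrt 3 - 2 != 0 :> R.
  by rewrite subr_eq0; apply/eqP; nra.
by apply: (mulIf denom_neq0); rewrite divfK //; nra.
Qed.

Theorem theorem9 (R : realType) :
  exists (C : R) (K : nat), forall k : nat, (0 < k)%N -> (K <= k)%N ->
    forall mS mA : R,
      is_min_cost (@symmetric_assignment k) mS ->
      is_min_cost (@assignment k) mA ->
      (8 * Num.sqrt 3 - 12) / (2 * Num.sqrt 3 - 2) - C / k%:R <= mS / mA.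
Proof.
exists 9, 10%N => k _ k_ge10 mS mA [[B [B_sym <-]] _] [[A [A_assign <-]] A_min].
have [p_ge p_le p_lt kp_sq] := peak_bounds R k_ge10.
have k_ge10R : 10 <= k%:R :> R by rewrite (ler_nat R 10).
rewrite sqrt3_ratio; apply: (ratio_lower_bound (p := peak R k)) => //.
- rewrite cost_symmetric // ler_pM2l //; apply: sum_row_cost_ge => //; lra.
- apply: lt_le_trans (cost_ge2 A_assign _ _) => //; first exact: leq_trans k_ge10.
  lra.
- exact: le_trans (A_min _ (row_assignment k)) (cost_row_assignment R k).
Qed.
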